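(* Let $\Pi$ and $\Pi'$ be $n$-dimensional linear spaces, both satisfying the exchange axiom and the axiom (P2), let $k\ge 1$ with $n\ge 2k+1$, and let $f$ be an injection of $\mathcal{G}_k(\Pi)$ to $\mathcal{G}_k(\Pi')$ sending base subsets to base subsets. For each $(k-1)$-dimensional subspace $S$ of $\Pi$ let $f_{k-1}(S)$ be the unique subspace $S'$ of $\Pi'$ of dimension $k-1$ or $k+1$ with $f(\mathcal{G}_k(S))\subset\mathcal{G}_k(S')$; then $f_{k-1}$ maps $\mathcal{G}_{k-1}(\Pi)$ entirely into $\mathcal{G}_{k-1}(\Pi')$ or entirely into $\mathcal{G}_{k+1}(\Pi')$. The mapping $f_{k-1}$ sends every base subset of $\mathcal{G}_{k-1}(\Pi)$ to a base subset (of $\mathcal{G}_{k-1}(\Pi')$ or of $\mathcal{G}_{k+1}(\Pi')$, respectively).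
   Context: A linear space $\Pi=(P,\mathcal{L})$ is a set $P$ of points with a family $\mathcal{L}$ of proper subsets (lines) such that each line has at least two points and any two distinct points $p,q$ lie on exactly one line $pq$. A subspace is a set $S\subset P$ with $pq\subset S$ for all distinct $p,q\in S$; $\overline{X}$ is the smallest subspace containing $X$. A set $X$ is independent if $\overline{X}$ is not spanned by a proper subset of $X$; a base of $\Pi$ is an independent set spanning $P$. A subspace is $m$-dimensional if $m+1$ is the smallest number of points spanning it. Exchange axiom: for every $X\subset P$ and $p_1,p_2\in P\setminus\overline{X}$, $p_2\in\overline{X\cup\{p_1\}}$ implies $p_1\in\overline{X\cup\{p_2\}}$. Axiom (P2): every line has at least three points. $\mathcal{G}_k(\Pi)$ is the set of $k$-dimensional subspaces; for a subspace $U$, $\mathcal{G}_k(U)$ is the set of $k$-dimensional subspaces incident to $U$ (contained in $U$ or containing $U$). The base subset of $\mathcal{G}_m(\Pi)$ associated with a base $B$ is the set of all $m$-dimensional subspaces spanned by points of $B$. *)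

From Stdlib Require Import List Arith.

Section LinearSpaces.
Variable P : Type.
Variable L : (P -> Prop) -> Prop.

Definition sub (A B : P -> Prop) : Prop := forall x, A x -> B x.
Definition seteq (A B : P -> Prop) : Prop := forall x, A x <-> B x.
Definition full : P -> Prop := fun _ => True.

Definition linear_space : Prop :=
  (forall l, L l -> exists x, ~ l x) /\
  (forall l, L l -> exists p q, p <> q /\ l p /\ l q) /\
  (forall p q, p <> q ->
     exists l, L l /\ l p /\ l q /\
       forall l', L l' -> l' p -> l' q -> seteq l' l).

Definition subspace (S : P -> Prop) : Prop :=
  forall p q l, S p -> S q -> p <> q -> L l -> l p -> l q -> sub l S.

Definition span (X : P -> Prop) : P -> Prop :=
  fun x => forall S, subspace S -> sub X S -> S x.

Definition span_list (l : list P) : P -> Prop := span (fun x => In x l).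

Definition dim (S : P -> Prop) (m : nat) : Prop :=
  subspace S /\
  (exists l, length l = m + 1 /\ seteq (span_list l) S) /\
  (forall l, length l < m + 1 -> ~ seteq (span_list l) S).

Definition independent (X : P -> Prop) : Prop :=
  forall Y, sub Y X -> ~ sub X Y -> ~ seteq (span Y) (span X).

Definition base (B : P -> Prop) : Prop :=
  independent B /\ seteq (span B) full.

Definition exchange_axiom : Prop :=
  forall (X : P -> Prop) p1 p2, ~ span X p1 -> ~ span X p2 ->
    span (fun x => X x \/ x = p1) p2 -> span (fun x => X x \/ x = p2) p1.

Definition axiom_P2 : Prop :=
  forall l, L l -> exists a b c, l a /\ l b /\ l c /\ a <> b /\ a <> c /\ b <> c.

Definition incident (U S : P -> Prop) : Prop := sub S U \/ sub U S.

Definition Gk_of (k : nat) (U S : P -> Prop) : Prop := dim S k /\ incident U S.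

Definition base_subset (B : P -> Prop) (m : nat) (S : P -> Prop) : Prop :=
  dim S m /\ exists X, sub X B /\ seteq (span X) S.

End LinearSpaces.

Arguments full {P}.
Arguments sub {P}.
Arguments seteq {P}.
Arguments linear_space {P}.
Arguments subspace {P}.
Arguments span {P}.
Arguments span_list {P}.
Arguments dim {P}.
Arguments independent {P}.
Arguments base {P}.
Arguments exchange_axiom {P}.
Arguments axiom_P2 {P}.
Arguments incident {P}.
Arguments Gk_of {P}.
Arguments base_subset {P}.

Definition maps_base_subsets {P P' : Type} (L : (P -> Prop) -> Prop)
  (L' : (P' -> Prop) -> Prop) (m m' : nat)
  (g : (P -> Prop) -> (P' -> Prop)) : Prop :=
  forall B, base L B -> exists B', base L' B' /\
    forall T, (exists S, base_subset L B m S /\ g S = T) <-> base_subset L' B' m' T.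

Definition fk1_prop {P P' : Type} (L : (P -> Prop) -> Prop)
  (L' : (P' -> Prop) -> Prop) (k : nat) (f : (P -> Prop) -> (P' -> Prop))
  (S : P -> Prop) (S' : P' -> Prop) : Prop :=
  (dim L' S' (k - 1) \/ dim L' S' (k + 1)) /\
  forall T, Gk_of L k S T -> Gk_of L' k S' (f T).

(* Fix a base B of Pi and the base B' of Pi' whose base subsets of G_k are the f-images of
   those of B.  For Y ⊆ B with |Y| = k, the k-subspaces <Y + c> (c ∈ B ∖ Y) go to base
   subspaces <X'_c>, all incident to g<Y>.  If g<Y> has dimension k-1, it is <D> for
   D = X'_c1 ∩ X'_c2, and c |-> X'_c is a bijection onto the (k+1)-subsets of B' containing D
   (a star); if it has dimension k+1, it is <D> for D = X'_c1 + e of size k+2, every X'_c lies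
   in D, and injectivity forces n + 1 - k <= k + 2, i.e. n = 2k+1 (a top).  Two such Y sharing
   k-1 points cannot give a star and a top, since a k-subspace between the star and the top
   would have two preimages; so the case is constant on a base, and then everywhere, as any
   two (k-1)-subspaces are spanned by k-subsets of two bases sharing a third k-subset.
   Surjectivity onto the base (k-1)- or (k+1)-subspaces of B' follows by counting inside the
   preimage of a single base k-subspace. *)

From Stdlib Require Import List Arith Lia Classical FunctionalExtensionality PropExtensionality.

Lemma seteq_eq {T} (A B : T -> Prop) : seteq A B -> A = B.
Proof.
  intro H; apply functional_extensionality; intro x; apply propositional_extensionality; auto.
Qed.

Definition setU1 {T} (X : T -> Prop) (a : T) : T -> Prop := fun x => X x \/ x = a.
Definition setD1 {T} (X : T -> Prop) (a : T) : T -> Prop := fun x => X x /\ x <> a.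
Definition setD {T} (X Y : T -> Prop) : T -> Prop := fun x => X x /\ ~ Y x.
Definition setI {T} (X Y : T -> Prop) : T -> Prop := fun x => X x /\ Y x.

Definition card {T} (X : T -> Prop) (m : nat) : Prop :=
  exists l, NoDup l /\ length l = m /\ forall x, In x l <-> X x.

Section Card.
Context {T : Type}.
Implicit Types (X Y : T -> Prop).

Lemma setU1D1 X a : X a -> setU1 (setD1 X a) a = X.
Proof.
  intro Xa; apply seteq_eq; intro x; unfold setU1, setD1.
  destruct (classic (x = a)) as [->|]; tauto.
Qed.

Lemma setD1U1 X a : ~ X a -> setD1 (setU1 X a) a = X.
Proof.
  intro nXa; apply seteq_eq; intro x; unfold setU1, setD1.
  split; [tauto|]. intro Xx; split; [auto|]. intros ->; contradiction.
Qed.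

Lemma setU1_inj X a b : ~ X a -> setU1 X a = setU1 X b -> a = b.
Proof.
  intros nXa E. assert (H : setU1 X b a) by (rewrite <- E; right; auto).
  destruct H; [contradiction|auto].
Qed.

Lemma card_set0 : card (fun _ : T => False) 0.
Proof. exists nil; repeat split; [constructor|intros []|intros []]. Qed.

Lemma card0_nmem X x : card X 0 -> ~ X x.
Proof. intros [[|] [_ [Hl H]]] Hx; [apply H in Hx; destruct Hx|discriminate]. Qed.

Lemma card_S_mem X m : card X (S m) -> exists a, X a.
Proof. intros [[|a l] [_ [Hl H]]]; [discriminate|]. exists a; apply H; left; auto. Qed.

Lemma card_ext X Y m : card X m -> seteq X Y -> card Y m.
Proof. intros C E; rewrite <- (seteq_eq X Y E); auto. Qed.

Lemma card_setU1 X m a : card X m -> ~ X a -> card (setU1 X a) (S m).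
Proof.
  intros [l [Hn [Hl H]]] nXa. exists (a :: l). repeat split.
  - constructor; auto. rewrite H; auto.
  - simpl; lia.
  - intros [->|Hx]; [right; auto|left; apply H; auto].
  - intros [Hx| ->]; [right; apply H; auto|left; auto].
Qed.

Lemma card_setD1 X m a : card X m -> X a -> card (setD1 X a) (m - 1).
Proof.
  intros [l [Hn [Hl H]]] Xa. apply H in Xa. destruct (in_split _ _ Xa) as [l1 [l2 ->]].
  exists (l1 ++ l2). repeat split.
  - eapply NoDup_remove_1; eauto.
  - rewrite !length_app in *; simpl in *; lia.
  - apply H. apply in_app_or in H0; apply in_or_app; simpl; tauto.
  - intros ->. apply (NoDup_remove_2 _ _ _ Hn); auto.
  - intros [Hx Hne]. apply H in Hx. apply in_app_or in Hx; apply in_or_app; simpl in Hx.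
    destruct Hx as [?|[?|?]]; auto. congruence.
Qed.

Lemma card_mem_pos X m a : card X m -> X a -> 0 < m.
Proof. intros C Xa; destruct m; [destruct (card0_nmem X a C Xa)|lia]. Qed.

Lemma card1_eq X a b : card X 1 -> X a -> X b -> a = b.
Proof.
  intros C Xa Xb. apply NNPP; intro ne.
  apply (card0_nmem (setD1 X a) b (card_setD1 X 1 a C Xa)). split; auto.
Qed.

Lemma card_of_sub_list X l : (forall x, X x -> In x l) -> exists a, a <= length l /\ card X a.
Proof.
  revert X; induction l as [|h t IH]; intros X HX.
  - exists 0; split; auto. apply (card_ext _ X 0 card_set0).
    intro x; split; [intros []|intro Xx; destruct (HX x Xx)].
  - destruct (IH (setD1 X h)) as [a [Ha C]].
    { intros x [Xx ne]. destruct (HX x Xx); [congruence|auto]. }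
    destruct (classic (X h)) as [Xh|nXh].
    + exists (S a); split; [simpl; lia|]. rewrite <- (setU1D1 X h Xh).
      apply card_setU1; auto. intros [_ ne]; auto.
    + exists a; split; [simpl; lia|]. apply (card_ext _ _ _ C).
      intro x; split; [intros [? ?]; auto|intro Xx; split; [auto|intros ->; contradiction]].
Qed.

Lemma card_sub X Y b : sub X Y -> card Y b -> exists a, a <= b /\ card X a.
Proof.
  intros XY [l [_ [Hl H]]]. subst b. apply card_of_sub_list. intros x Xx; apply H, XY, Xx.
Qed.

Lemma card_sub_eq X Y a b : sub X Y -> card X a -> card Y b -> b <= a -> sub Y X.
Proof.
  intros XY [l [Hn [Hl H]]] [l' [Hn' [Hl' H']]] ba x Yx. subst.
  apply H, (NoDup_length_incl (l' := l') Hn); [auto| |apply H', Yx].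
  intros y Hy; apply H', XY, H, Hy.
Qed.

Lemma card_sub_exists X a b : card X b -> a <= b -> exists Y, sub Y X /\ card Y a.
Proof.
  intros C ab. replace b with (a + (b - a)) in C by lia. revert X C.
  induction (b - a) as [|d IH]; intros X C.
  - exists X; split; [intros x Xx; auto|]. rewrite Nat.add_0_r in C; auto.
  - replace (a + S d) with (S (a + d)) in C by lia.
    destruct (card_S_mem _ _ C) as [x Xx]. pose proof (card_setD1 _ _ _ C Xx) as C'.
    replace (S (a + d) - 1) with (a + d) in C' by lia.
    destruct (IH _ C') as [Y [YX CY]]. exists Y; split; auto. intros y Yy; apply YX, Yy.
Qed.

Lemma card_setD X Y a b : card X b -> sub Y X -> card Y a -> card (setD X Y) (b - a).
Proof.
  intros CX. revert Y; induction a as [|a IH]; intros Y YX CY.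
  - rewrite Nat.sub_0_r. apply (card_ext _ _ _ CX).
    intro x; split; [intro Xx; split; [auto|apply (card0_nmem _ _ CY)]|intros [? ?]; auto].
  - destruct (card_S_mem _ _ CY) as [y Yy]. pose proof (card_setD1 _ _ _ CY Yy) as CY'.
    replace (S a - 1) with a in CY' by lia.
    assert (C1 : card (setD X (setD1 Y y)) (b - a)) by (apply IH; auto; intros x [? ?]; auto).
    assert (C2 := card_setD1 _ _ y C1).
    replace (b - a - 1) with (b - S a) in C2 by lia.
    apply (card_ext _ _ _ (C2 (conj (YX y Yy) (fun H => proj2 H eq_refl)))).
    intro x; unfold setD, setD1; split.
    + intros [[Xx nY] ne]; split; [auto|intro Yx; apply nY; split; auto].
    + intros [Xx nY]; split; [split; [auto|tauto]|intros ->; contradiction].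
Qed.

Lemma card_sub_S X Y m : sub X Y -> card X m -> card Y (S m) ->
  exists e, Y e /\ ~ X e /\ Y = setU1 X e.
Proof.
  intros XY CX CY. assert (C := card_setD Y X m (S m) CY XY CX).
  replace (S m - m) with 1 in C by lia.
  destruct (card_S_mem _ _ C) as [e [Ye nXe]]. exists e; repeat split; auto.
  apply seteq_eq; intro x; unfold setU1; split.
  - intro Yx. destruct (classic (X x)); [auto|right; apply (card1_eq _ _ _ C); split; auto].
  - intros [Xx| ->]; auto.
Qed.

Lemma Forall2_exists {A B} (R : A -> B -> Prop) (l : list A) :
  (forall x, In x l -> exists y, R x y) -> exists l', Forall2 R l l'.
Proof.
  induction l as [|h t IH]; intro H; [exists nil; constructor|].
  destruct (H h (or_introl eq_refl)) as [y Hy]. destruct IH as [l' Hl'].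
  { intros; apply H; right; auto. }
  exists (y :: l'); constructor; auto.
Qed.

Lemma Forall2_in_r {A B} (R : A -> B -> Prop) l l' y :
  Forall2 R l l' -> In y l' -> exists x, In x l /\ R x y.
Proof.
  induction 1 as [|x y' l l' Rxy _ IH]; [intros []|]. intros [<-|Hy]; [exists x; split; [left|]; auto|].
  destruct (IH Hy) as [z [? ?]]; exists z; split; [right|]; auto.
Qed.

End Card.

Lemma inj_rel_card {T U} (X : T -> Prop) (Y : U -> Prop) (R : T -> U -> Prop) a b :
  card X a -> card Y b ->
  (forall x, X x -> exists y, Y y /\ R x y) ->
  (forall x1 x2 y, X x1 -> X x2 -> R x1 y -> R x2 y -> x1 = x2) ->
  a <= b /\ (a = b -> forall y, Y y -> exists x, X x /\ R x y).
Proof.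
  intros [l [Hn [Hl H]]] [l' [Hn' [Hl' H']]] tot inj.
  destruct (Forall2_exists (fun x y => Y y /\ R x y) l) as [m Hm].
  { intros x Hx; apply tot, H, Hx. }
  assert (len : length m = length l) by (symmetry; eapply Forall2_length; eauto).
  assert (HX : forall x, In x l -> X x) by (intros; apply H; auto).
  assert (nd : NoDup m).
  { clear - Hm Hn HX inj. induction Hm as [|x y l0 m0 [_ Rxy] Hm0 IHm]; constructor.
    - intro Hy. destruct (Forall2_in_r _ _ _ _ Hm0 Hy) as [x' [Hx' [_ Rx'y]]].
      inversion Hn; subst. assert (x = x') by (apply (inj x x' y); auto; apply HX; simpl; auto).
      subst; contradiction.
    - apply IHm; [inversion Hn; auto|intros; apply HX; right; auto]. }
  assert (incl_m : incl m l').
  { intros y Hy. destruct (Forall2_in_r _ _ _ _ Hm Hy) as [x [_ [Yy _]]]. apply H'; auto. }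
  split.
  - subst. rewrite <- len. apply NoDup_incl_length; auto.
  - intros ab y Yy. assert (Hy : In y m) by (apply (NoDup_length_incl (l' := l') nd); auto; [lia|apply H'; auto]).
    destruct (Forall2_in_r _ _ _ _ Hm Hy) as [x [Hx [_ Rxy]]]. exists x; split; [apply H|]; auto.
Qed.


Section Matroid.
Context {P : Type} (L : (P -> Prop) -> Prop).
Implicit Types (X Y I J S : P -> Prop).

Lemma sub_span X : sub X (span L X).
Proof. intros x Xx S _ XS; apply XS, Xx. Qed.

Lemma span_mono X Y : sub X Y -> sub (span L X) (span L Y).
Proof. intros XY x Hx S HS YS. apply Hx; auto. intros y Xy; apply YS, XY, Xy. Qed.

Lemma subspace_span X : subspace L (span L X).
Proof. intros p q l Hp Hq pq Hl lp lq x lx S HS XS. apply (HS p q l); auto; [apply Hp|apply Hq]; auto. Qed.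

Lemma span_least X S : subspace L S -> sub X S -> sub (span L X) S.
Proof. intros HS XS x Hx; apply Hx; auto. Qed.

Lemma span_sub_span X Y : sub X (span L Y) -> sub (span L X) (span L Y).
Proof. apply span_least, subspace_span. Qed.

Lemma span_set0 x : ~ span L (fun _ => False) x.
Proof. intro H. apply (span_least (fun _ => False) (fun _ => False)) in H; [exact H|intros p q l []|intros y Hy; exact Hy]. Qed.

Lemma span_setD1 X x : span L (setD1 X x) x -> span L X = span L (setD1 X x).
Proof.
  intro Hx. apply seteq_eq; intro y; split.
  - apply span_sub_span. intros z Xz. destruct (classic (z = x)) as [->|ne]; auto.
    apply sub_span; split; auto.
  - apply span_mono. intros z [? ?]; auto.
Qed.

Definition indep X := forall x, X x -> ~ span L (setD1 X x) x.

Lemma independent_indep X : independent L X <-> indep X.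
Proof.
  split.
  - intros H x Xx Hx. apply (H (setD1 X x)).
    + intros y [? ?]; auto.
    + intro XD. destruct (XD x Xx); auto.
    + rewrite <- span_setD1; auto. intro; tauto.
  - intros H Y YX nXY E. apply nXY. intros x Xx. apply NNPP; intro nYx.
    apply (H x Xx). apply (span_mono Y); [intros y Yy; split; [auto|intros ->; auto]|].
    apply E, sub_span, Xx.
Qed.

Lemma indep_sub X Y : sub Y X -> indep X -> indep Y.
Proof.
  intros YX HX x Yx Hx. apply (HX x (YX x Yx)). revert Hx; apply span_mono.
  intros y [? ?]; split; auto.
Qed.

Lemma indep_span_mem B X x : indep B -> sub X B -> B x -> span L X x -> X x.
Proof.
  intros HB XB Bx Hx. apply NNPP; intro nXx. apply (HB x Bx). revert Hx; apply span_mono.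
  intros y Xy; split; [auto|intros ->; contradiction].
Qed.

Lemma indep_span_sub B X1 X2 : indep B -> sub X1 B -> sub X2 B ->
  sub (span L X1) (span L X2) -> sub X1 X2.
Proof. intros HB X1B X2B E x X1x. apply (indep_span_mem B); auto. apply E, sub_span, X1x. Qed.

Lemma indep_span_inj B X1 X2 : indep B -> sub X1 B -> sub X2 B -> span L X1 = span L X2 -> X1 = X2.
Proof.
  intros HB X1B X2B E. apply seteq_eq; intro x; split; revert x;
  apply (indep_span_sub B); auto; rewrite E; intros y Hy; auto.
Qed.

Lemma base_iff B : base L B <-> indep B /\ span L B = full.
Proof.
  unfold base. rewrite independent_indep. split; intros [? H]; split; auto.
  - apply seteq_eq; auto.
  - rewrite H; intro; tauto.
Qed.

Hypothesis exch : exchange_axiom L.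

Lemma indep_setU1 X p : indep X -> ~ span L X p -> indep (setU1 X p).
Proof.
  intros HX Xp x Hx Hs. destruct (classic (x = p)) as [->|ne].
  - apply Xp. revert Hs; apply span_mono. intros y [[?|?] ?]; [auto|congruence].
  - destruct Hx as [Xx|]; [|congruence].
    assert (Hp : ~ span L (setD1 X x) p) by (intro H; apply Xp; revert H; apply span_mono; intros y [? ?]; auto).
    apply Xp. apply (span_mono (setU1 (setD1 X x) x)); [intros y [[? ?]| ->]; auto|].
    apply exch; auto. revert Hs; apply span_mono.
    intros y [[Xy| ->] yx]; [left; split|right]; auto.
Qed.

(* [C] is carried along unchanged so that the induction on [b] can move points of [I] into it. *)
Lemma steinitz_gen b : forall J C I a, card J b -> card I a ->
  indep (fun x => C x \/ I x) -> (forall x, C x -> ~ I x) ->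
  sub I (span L (fun y => C y \/ J y)) -> a <= b.
Proof.
  induction b as [|b IH]; intros J C I a CJ CI HCI CI_disj IJ.
  - destruct a as [|a]; [auto|]. destruct (card_S_mem _ _ CI) as [x Ix]. exfalso.
    apply (HCI x (or_intror Ix)). generalize (IJ x Ix). apply span_mono.
    intros y [Cy|Jy]; [|destruct (card0_nmem _ _ CJ Jy)]. split; [left; auto|intros ->; apply (CI_disj x); auto].
  - destruct (card_S_mem _ _ CJ) as [j Jj]. pose proof (card_setD1 _ _ _ CJ Jj) as CJ'.
    replace (S b - 1) with b in CJ' by lia.
    set (X := fun y => C y \/ setD1 J j y).
    destruct (classic (sub I (span L X))) as [IX|nIX]; [pose proof (IH _ C I a CJ' CI HCI CI_disj IX); lia|].
    apply not_all_ex_not in nIX. destruct nIX as [x nIx]. apply imply_to_and in nIx.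
    destruct nIx as [Ix nXx].
    assert (CJX : sub (fun y => C y \/ J y) (setU1 X j)).
    { intros y [Cy|Jy]; [left; left; auto|]. destruct (classic (y = j)); [right|left; right; split]; auto. }
    assert (nXj : ~ span L X j).
    { intro Xj. apply nXx. apply (span_sub_span (fun y => C y \/ J y)); [|apply IJ; auto].
      intros y Hy. destruct (CJX y Hy) as [Xy| ->]; [apply sub_span|]; auto. }
    assert (jx : span L (setU1 X x) j).
    { apply exch; auto. generalize (IJ x Ix). apply span_mono; auto. }
    assert (a - 1 <= b); [|pose proof (card_mem_pos _ _ _ CI Ix); lia].
    apply (IH _ (setU1 C x) (setD1 I x) _ CJ' (card_setD1 _ _ _ CI Ix)).
    + revert HCI. apply indep_sub. intros y [[Cy| ->]|[Iy _]]; auto.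
    + intros y [Cy| ->] [Iy ne]; [apply (CI_disj y)|]; auto.
    + intros y [Iy _]. apply (span_sub_span (fun y => C y \/ J y)); [|apply IJ; auto].
      intros z [Cz|Jz]; [apply sub_span; left; left; auto|].
      destruct (classic (z = j)) as [->|ne]; [|apply sub_span; right; split; auto].
      revert jx. apply span_mono. intros w [[Cw|Jw]| ->]; [left; left|right|left; right]; auto.
Qed.

Lemma steinitz I J a b : indep I -> card I a -> card J b -> sub I (span L J) -> a <= b.
Proof.
  intros HI CI CJ IJ. apply (steinitz_gen b J (fun _ => False) I); auto.
  - revert HI; apply indep_sub. intros x [[]|?]; auto.
  - intros x Ix. generalize (IJ x Ix). apply span_mono. intros y Jy; right; exact Jy.
Qed.

Lemma span_list_card I c : card I c -> exists l, length l = c /\ span_list L l = span L I.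
Proof.
  intros [l [_ [Hl H]]]. exists l; split; auto. unfold span_list. f_equal. apply seteq_eq; auto.
Qed.

Lemma dim_iff S m : dim L S m <-> exists I, indep I /\ card I (m + 1) /\ span L I = S.
Proof.
  split.
  - intros [HS [[l [Hl E]] min]].
    destruct (card_of_sub_list (fun x => In x l) l) as [c [Hc CI]]; auto.
    assert (EI : span L (fun x => In x l) = S) by (apply seteq_eq; auto).
    assert (c = m + 1).
    { destruct (Nat.lt_ge_cases c (m + 1)) as [lt|]; [exfalso|lia].
      destruct (span_list_card _ _ CI) as [l2 [Hl2 E2]]. apply (min l2); [lia|].
      rewrite E2, EI. intro; tauto. }
    subst c. exists (fun x => In x l). repeat split; auto.
    intros x Hx Hs. destruct (span_list_card _ _ (card_setD1 _ _ _ CI Hx)) as [l3 [Hl3 E3]].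
    apply (min l3); [lia|]. rewrite E3, <- span_setD1, EI; auto. intro; tauto.
  - intros [I [HI [CI <-]]]. split; [apply subspace_span|]. split.
    + destruct (span_list_card _ _ CI) as [l [Hl E]]. exists l; split; auto. rewrite E; intro; tauto.
    + intros l Hl E. destruct (card_of_sub_list (fun x => In x l) l) as [c [Hc Cl]]; auto.
      assert (m + 1 <= c); [|lia].
      apply (steinitz I _ _ _ HI CI Cl). intros x Ix. apply E, sub_span, Ix.
Qed.

Lemma dim_span I m : indep I -> card I (m + 1) -> dim L (span L I) m.
Proof. intros; apply dim_iff; eauto. Qed.

Lemma dim_nonempty S m : dim L S m -> exists x, S x.
Proof.
  intro H; apply dim_iff in H. destruct H as [I [_ [CI <-]]].
  rewrite Nat.add_1_r in CI. destruct (card_S_mem _ _ CI) as [x Ix].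
  exists x; apply sub_span, Ix.
Qed.

Lemma dim_sub_eq U V a b : sub U V -> dim L U a -> dim L V b -> b <= a -> U = V /\ a = b.
Proof.
  intros UV HU HV ba. apply dim_iff in HU, HV.
  destruct HU as [I [HI [CI <-]]]; destruct HV as [J [HJ [CJ <-]]].
  assert (a + 1 <= b + 1) by (apply (steinitz I J _ _ HI CI CJ); intros x Ix; apply UV, sub_span, Ix).
  split; [|lia]. apply seteq_eq; intro x; split; [apply UV|]. intro Jx. apply NNPP; intro nIx.
  assert (S (a + 1) <= b + 1); [|lia].
  apply (steinitz (setU1 I x) J _ _ (indep_setU1 I x HI nIx)); auto.
  - apply card_setU1; auto. intro Ix; apply nIx, sub_span, Ix.
  - intros y [Iy| ->]; auto. apply UV, sub_span, Iy.
Qed.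

Lemma dim_le_card_span U D m d : dim L U m -> sub U (span L D) -> card D d -> m + 1 <= d.
Proof.
  intros HU UD CD. apply dim_iff in HU. destruct HU as [I [HI [CI <-]]].
  apply (steinitz I D _ _ HI CI CD). intros x Ix; apply UD, sub_span, Ix.
Qed.

Lemma dim_unique S a b : dim L S a -> dim L S b -> a = b.
Proof.
  intros Ha Hb. destruct (Nat.le_ge_cases a b).
  - symmetry; apply (dim_sub_eq S S b a); auto. intros x Sx; auto.
  - apply (dim_sub_eq S S a b); auto. intros x Sx; auto.
Qed.

Lemma incident_dim_lt U S a b : dim L U a -> dim L S b -> a < b -> incident U S -> sub U S.
Proof.
  intros HU HS ab [SU|US]; [exfalso|auto]. destruct (dim_sub_eq S U b a SU); auto; lia.
Qed.

Lemma incident_dim_gt U S a b : dim L U a -> dim L S b -> b < a -> incident U S -> sub S U.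
Proof.
  intros HU HS ab [SU|US]; [auto|exfalso]. destruct (dim_sub_eq U S a b US); auto; lia.
Qed.

Lemma exchange_out d : forall Z D p, card D d -> span L (fun y => Z y \/ D y) p -> ~ span L Z p ->
  exists x, D x /\ span L (fun y => Z y \/ setD1 D x y \/ y = p) x.
Proof.
  induction d as [|d IH]; intros Z D p CD Hp nZp.
  - exfalso; apply nZp; revert Hp; apply span_mono.
    intros y [?|Dy]; [auto|destruct (card0_nmem _ _ CD Dy)].
  - destruct (card_S_mem _ _ CD) as [x Dx]. pose proof (card_setD1 _ _ _ CD Dx) as CD'.
    replace (S d - 1) with d in CD' by lia.
    set (X := fun y => Z y \/ setD1 D x y).
    destruct (classic (span L X p)) as [Xp|nXp].
    + destruct (IH Z _ p CD' Xp nZp) as [x' [[Dx' _] Hx']]. exists x'; split; auto.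
      revert Hx'; apply span_mono. intros y [?|[[[? ?] ?]|?]]; [left|right; left; split|right; right]; auto.
    + exists x; split; auto.
      assert (nXx : ~ span L X x).
      { intro H; apply nXp. revert Hp; apply span_sub_span. intros y [Zy|Dy]; [apply sub_span; left; auto|].
        destruct (classic (y = x)) as [->|ne]; [auto|apply sub_span; right; split; auto]. }
      apply (span_mono (setU1 X p)); [intros y [[?|?]|?]; auto|].
      apply exch; auto. revert Hp; apply span_mono.
      intros y [Zy|Dy]; [left; left; auto|]. destruct (classic (y = x)); [right|left; right; split]; auto.
Qed.

Lemma span_setI B X1 X2 c : indep B -> sub X1 B -> sub X2 B -> card X1 c ->
  sub (setI (span L X1) (span L X2)) (span L (setI X1 X2)).
Proof.
  intros HB X1B X2B C1 p [Hp1 Hp2]. apply NNPP; intro np.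
  destruct (card_sub (setD X1 X2) X1 c) as [d [_ CD]]; [intros x [? ?]; auto|auto|].
  destruct (exchange_out d (setI X1 X2) _ p CD) as [x [[X1x nX2x] Hx]]; auto.
  { revert Hp1; apply span_mono. intros y Hy. destruct (classic (X2 y)); [left|right]; split; auto. }
  apply (HB x (X1B x X1x)). revert Hx. apply span_sub_span.
  intros y [[X1y X2y]|[[[X1y nX2y] ne]| ->]].
  - apply sub_span. split; [auto|intros ->; contradiction].
  - apply sub_span. split; auto.
  - revert Hp2. apply span_mono. intros z X2z; split; [auto|intros ->; contradiction].
Qed.

Variable n : nat.
Hypothesis dim_full : dim L full n.

Lemma base_exists : exists B, base L B.
Proof.
  apply dim_iff in dim_full. destruct dim_full as [J [HJ [_ EJ]]].
  exists J. apply base_iff; auto.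
Qed.

Lemma base_card B : base L B -> card B (n + 1).
Proof.
  intro HB. apply base_iff in HB. destruct HB as [HB EB].
  pose proof dim_full as Hd. apply dim_iff in Hd. destruct Hd as [J [HJ [CJ EJ]]].
  assert (bound : forall X c, sub X B -> card X c -> c <= n + 1).
  { intros X c XB CX. apply (steinitz X J _ _ (indep_sub _ _ XB HB) CX CJ).
    rewrite EJ. intros x _; exact I. }
  assert (grow : forall d, (exists X, sub X B /\ card X d) \/ exists c, card B c).
  { induction d as [|d [[X [XB CX]]|?]]; auto.
    - left; exists (fun _ => False); split; [intros _ []|apply card_set0].
    - destruct (classic (sub B X)) as [BX|nBX].
      + right; exists d. apply (card_ext X); auto. intro x; split; auto.
      + apply not_all_ex_not in nBX; destruct nBX as [y nBy]; apply imply_to_and in nBy.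
        left; exists (setU1 X y); split; [intros x [?| ->]; [apply XB|]; tauto|].
        apply card_setU1; tauto. }
  destruct (grow (n + 2)) as [[X [XB CX]]|[c CB]]; [pose proof (bound _ _ XB CX); lia|].
  pose proof (bound B c (fun x h => h) CB).
  assert (n + 1 <= c); [|replace (n + 1) with c by lia; auto].
  apply (steinitz J B _ _ HJ CJ CB). rewrite EB. intros x _; exact I.
Qed.

Lemma indep_extend_gen I B : indep I -> forall d B0, card B0 d -> sub B0 B ->
  exists W, sub W B0 /\ (forall x, I x -> ~ W x) /\
    indep (fun x => I x \/ W x) /\ sub B0 (span L (fun x => I x \/ W x)).
Proof.
  intros HI d. induction d as [|d IH]; intros B0 C0 B0B.
  - exists (fun _ => False). repeat split.
    + intros _ [].
    + intros _ _ [].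
    + revert HI; apply indep_sub. intros x [?|[]]; auto.
    + intros x B0x; destruct (card0_nmem _ _ C0 B0x).
  - destruct (card_S_mem _ _ C0) as [b B0b]. pose proof (card_setD1 _ _ _ C0 B0b) as C1.
    replace (S d - 1) with d in C1 by lia.
    destruct (IH _ C1) as [W [WB0 [IW [HIW B0IW]]]]; [intros x [? ?]; auto|].
    destruct (classic (span L (fun x => I x \/ W x) b)) as [Hb|nHb].
    + exists W. repeat split; auto.
      * intros x Wx; apply WB0; auto.
      * intros x B0x. destruct (classic (x = b)) as [->|ne]; auto. apply B0IW; split; auto.
    + exists (setU1 W b). repeat split.
      * intros x [Wx| ->]; [apply WB0|]; auto.
      * intros x Ix [Wx| ->]; [eapply IW; eauto|]. apply nHb, sub_span; auto.
      * apply (indep_sub (setU1 (fun x => I x \/ W x) b)).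
        { intros x [?|[?| ->]]; [left; left|left; right|right]; auto. }
        apply indep_setU1; auto.
      * intros x B0x. destruct (classic (x = b)) as [->|ne]; [apply sub_span; right; right; auto|].
        generalize (B0IW x (conj B0x ne)). apply span_mono. intros y [?|?]; [left|right; left]; auto.
Qed.

Lemma indep_extend I B : indep I -> base L B ->
  exists W, sub W B /\ (forall x, I x -> ~ W x) /\ base L (fun x => I x \/ W x).
Proof.
  intros HI HB. destruct (indep_extend_gen I B HI _ B (base_card B HB)) as [W [WB [IW [HIW BIW]]]].
  { intros x Bx; auto. }
  exists W. split; [auto|split; [auto|]]. apply base_iff; split; [auto|].
  apply base_iff in HB. destruct HB as [_ EB]. apply seteq_eq. intro x; split; [intros; exact Logic.I|].
  intros _. apply (span_sub_span B); auto. rewrite EB; exact Logic.I.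
Qed.

Lemma base_subset_iff B m S : base L B ->
  base_subset L B m S <-> exists X, sub X B /\ card X (m + 1) /\ S = span L X.
Proof.
  intro HB. pose proof (base_card _ HB) as CB. apply base_iff in HB. destruct HB as [HB _]. split.
  - intros [HS [X [XB E]]]. apply seteq_eq in E. subst S.
    destruct (card_sub X B _ XB CB) as [[|c] [_ CX]].
    + destruct (dim_nonempty _ _ HS) as [x Hx]. exfalso. apply (span_set0 x).
      revert Hx; apply span_mono. intros y Xy; apply (card0_nmem _ _ CX Xy).
    + rewrite <- Nat.add_1_r in CX.
      rewrite (dim_unique _ _ _ HS (dim_span X c (indep_sub _ _ XB HB) CX)). exists X; auto.
  - intros [X [XB [CX ->]]]. split.
    + apply dim_span; auto. apply (indep_sub _ _ XB HB).
    + exists X; split; auto. intro; tauto.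
Qed.

End Matroid.


Section Lemma2p8.
Context {P P' : Type} (L : (P -> Prop) -> Prop) (L' : (P' -> Prop) -> Prop)
  (n k : nat) (f g : (P -> Prop) -> (P' -> Prop)).
Hypothesis exch : exchange_axiom L.
Hypothesis exch' : exchange_axiom L'.
Hypothesis dim_full : dim L full n.
Hypothesis dim_full' : dim L' full n.
Hypothesis k_pos : 1 <= k.
Hypothesis n_large : 2 * k + 1 <= n.
Hypothesis f_inj : forall S T, dim L S k -> dim L T k -> f S = f T -> S = T.
Hypothesis f_bases : maps_base_subsets L L' k k f.
Hypothesis g_spec : forall S, dim L S (k - 1) -> fk1_prop L L' k f S (g S).

Definition g_keeps_dim (S : P -> Prop) : Prop := dim L' (g S) (k - 1).

Lemma dim_span_k1 B Y : indep L B -> sub Y B -> card Y k -> dim L (span L Y) (k - 1).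
Proof.
  intros HB YB CY. apply (dim_span L exch); [apply (indep_sub L B); auto|].
  replace (k - 1 + 1) with k by lia; auto.
Qed.

Section FixedBase.
Variables (B : P -> Prop) (B' : P' -> Prop).
Hypothesis base_B : base L B.
Hypothesis base_B' : base L' B'.
Hypothesis f_B : forall T, (exists S, base_subset L B k S /\ f S = T) <-> base_subset L' B' k T.

Lemma card_B : card B (n + 1).
Proof. exact (base_card L exch n dim_full B base_B). Qed.

Lemma card_B' : card B' (n + 1).
Proof. exact (base_card L' exch' n dim_full' B' base_B'). Qed.

Lemma indep_B : indep L B.
Proof. apply base_iff in base_B; tauto. Qed.

Lemma indep_B' : indep L' B'.
Proof. apply base_iff in base_B'; tauto. Qed.

Lemma dim_span_B' X' m : sub X' B' -> card X' (m + 1) -> dim L' (span L' X') m.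
Proof. intros X'B CX'. apply (dim_span L' exch'); auto. apply (indep_sub L' B'), indep_B'; auto. Qed.

Definition f_image (X : P -> Prop) (X' : P' -> Prop) : Prop :=
  sub X' B' /\ card X' (k + 1) /\ f (span L X) = span L' X'.

Lemma f_image_exists X : sub X B -> card X (k + 1) -> exists X', f_image X X'.
Proof.
  intros XB CX. assert (H : base_subset L' B' k (f (span L X))).
  { apply f_B. exists (span L X); split; auto. apply (base_subset_iff L exch n dim_full); eauto. }
  apply (base_subset_iff L' exch' n dim_full') in H; [|exact base_B'].
  destruct H as [X' [X'B [CX' E]]]. exists X'; repeat split; auto.
Qed.

Lemma f_image_onto X' : sub X' B' -> card X' (k + 1) ->
  exists X, sub X B /\ card X (k + 1) /\ f_image X X'.
Proof.
  intros X'B CX'. assert (H : base_subset L' B' k (span L' X')).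
  { apply (base_subset_iff L' exch' n dim_full'); eauto. }
  apply f_B in H. destruct H as [S [HS E]].
  apply (base_subset_iff L exch n dim_full) in HS; auto. destruct HS as [X [XB [CX ->]]].
  exists X; repeat split; auto.
Qed.

Lemma f_image_unique X X1' X2' : f_image X X1' -> f_image X X2' -> X1' = X2'.
Proof.
  intros [X1B [_ E1]] [X2B [_ E2]]. apply (indep_span_inj L' B'); auto; [apply indep_B'|congruence].
Qed.

Lemma f_image_inj X1 X2 X' : sub X1 B -> card X1 (k + 1) -> sub X2 B -> card X2 (k + 1) ->
  f_image X1 X' -> f_image X2 X' -> X1 = X2.
Proof.
  intros X1B C1 X2B C2 [_ [_ E1]] [_ [_ E2]]. apply (indep_span_inj L B); auto; [apply indep_B|].
  apply f_inj; [| |congruence]; apply (dim_span L exch); auto; apply (indep_sub L B), indep_B; auto.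
Qed.

Lemma setU1_B Y c : sub Y B -> card Y k -> B c -> ~ Y c -> sub (setU1 Y c) B /\ card (setU1 Y c) (k + 1).
Proof.
  intros YB CY Bc nYc. split; [intros x [Yx| ->]; auto|]. rewrite Nat.add_1_r. apply card_setU1; auto.
Qed.

Lemma setD1_B W w : sub W B -> card W (k + 1) -> W w -> sub (setD1 W w) B /\ card (setD1 W w) k.
Proof.
  intros WB CW Ww. split; [intros x [? ?]; auto|].
  replace k with (k + 1 - 1) by lia. apply card_setD1; auto.
Qed.

Definition image_through (Y : P -> Prop) (X' : P' -> Prop) : Prop :=
  exists c, B c /\ ~ Y c /\ f_image (setU1 Y c) X'.

Lemma image_through_inj Y c1 c2 X' : sub Y B -> card Y k -> B c1 -> ~ Y c1 -> B c2 -> ~ Y c2 ->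
  f_image (setU1 Y c1) X' -> f_image (setU1 Y c2) X' -> c1 = c2.
Proof.
  intros YB CY Bc1 nYc1 Bc2 nYc2 H1 H2. apply (setU1_inj Y); auto.
  destruct (setU1_B Y c1) as [? ?]; destruct (setU1_B Y c2) as [? ?]; auto.
  apply (f_image_inj _ _ X'); auto.
Qed.

Lemma image_through_incident Y X' : sub Y B -> card Y k -> image_through Y X' ->
  incident (g (span L Y)) (span L' X').
Proof.
  intros YB CY [c [Bc [nYc [X'B [CX' E]]]]]. destruct (setU1_B Y c) as [YcB CYc]; auto.
  destruct (g_spec _ (dim_span_k1 B Y indep_B YB CY)) as [_ Hinc]. rewrite <- E. apply Hinc. split.
  - apply (dim_span L exch); auto. apply (indep_sub L B), indep_B; auto.
  - right. apply span_mono. intros x Yx; left; auto.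
Qed.

Lemma two_images_through Y : sub Y B -> card Y k ->
  exists X1 X2 e, image_through Y X1 /\ image_through Y X2 /\ X2 e /\ ~ X1 e.
Proof.
  intros YB CY. assert (C := card_setD B Y k (n + 1) card_B YB CY).
  replace (n + 1 - k) with (S (S (n - k - 1))) in C by lia.
  destruct (card_S_mem _ _ C) as [c1 [Bc1 nYc1]].
  assert (C' := card_setD1 _ _ _ C (conj Bc1 nYc1)). simpl in C'.
  destruct (card_S_mem _ _ C') as [c2 [[Bc2 nYc2] c21]].
  destruct (setU1_B Y c1) as [Y1B CY1]; destruct (setU1_B Y c2) as [Y2B CY2]; auto.
  destruct (f_image_exists _ Y1B CY1) as [X1 H1]. destruct (f_image_exists _ Y2B CY2) as [X2 H2].
  destruct (classic (sub X2 X1)) as [X21|nX21].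
  - exfalso. apply c21. apply (image_through_inj Y c2 c1 X1); auto.
    destruct H1 as [X1B [CX1 E1]]; destruct H2 as [X2B [CX2 E2]].
    replace X1 with X2; [repeat split; auto|].
    apply seteq_eq; intro x; split; [apply X21|apply (card_sub_eq X2 X1 (k + 1) (k + 1)); auto].
  - apply not_all_ex_not in nX21. destruct nX21 as [e He]. apply imply_to_and in He.
    exists X1, X2, e. repeat split; [exists c1| exists c2| |]; tauto.
Qed.

Definition adapted (rel : (P' -> Prop) -> (P' -> Prop) -> Prop) (s : nat) Y D : Prop :=
  sub D B' /\ card D s /\ g (span L Y) = span L' D /\
  forall X', image_through Y X' <-> sub X' B' /\ card X' (k + 1) /\ rel D X'.

Definition star_adapted := adapted (fun D X' => sub D X') k.
Definition top_adapted := adapted (fun D X' => sub X' D) (k + 2).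

Lemma adapted_rel rel s Y D X' : adapted rel s Y D -> image_through Y X' -> rel D X'.
Proof. intros [_ [_ [_ G]]] HX'. exact (proj2 (proj2 (proj1 (G X') HX'))). Qed.

Lemma adapted_through rel s Y D X' : adapted rel s Y D -> sub X' B' -> card X' (k + 1) ->
  rel D X' -> image_through Y X'.
Proof. intros [_ [_ [_ G]]] X'B CX' R. apply G; auto. Qed.

Lemma star_span Y : sub Y B -> card Y k -> g_keeps_dim (span L Y) ->
  exists D, sub D B' /\ card D k /\ g (span L Y) = span L' D.
Proof.
  intros YB CY Hg.
  assert (low : forall X', image_through Y X' -> sub (g (span L Y)) (span L' X')).
  { intros X' HX'. apply (incident_dim_lt L' exch' _ _ (k - 1) k); auto; [|lia|].
    - destruct HX' as [_ [_ [_ [X'B [CX' _]]]]]. apply dim_span_B'; auto.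
    - apply image_through_incident; auto. }
  destruct (two_images_through Y YB CY) as [X1 [X2 [e [H1 [H2 [X2e nX1e]]]]]].
  pose proof H1 as [_ [_ [_ [X1B [CX1 _]]]]]. pose proof H2 as [_ [_ [_ [X2B [CX2 _]]]]].
  set (D := setI X1 X2).
  assert (gD : sub (g (span L Y)) (span L' D)).
  { intros x Hx. apply (span_setI L' exch' B' X1 X2 (k + 1)); auto; [apply indep_B'|].
    split; [apply (low X1)|apply (low X2)]; auto. }
  assert (DX1 : sub D X1) by (intros x [? ?]; auto).
  destruct (card_sub D X1 (k + 1) DX1 CX1) as [d [dk CD]].
  assert (k <= d) by (pose proof (dim_le_card_span L' exch' _ _ _ _ Hg gD CD); lia).
  assert (d <> k + 1).
  { intros ->. apply nX1e. apply (card_sub_eq X1 X2 (k + 1) (k + 1)); auto.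
    intros x X1x. apply (card_sub_eq D X1 (k + 1) (k + 1) DX1 CD CX1); auto. }
  replace d with k in CD by lia.
  exists D; repeat split; auto; [intros x [? ?]; auto|].
  apply (dim_sub_eq L' exch' _ _ (k - 1) (k - 1) gD Hg); auto.
  apply dim_span_B'; [intros x [? ?]; auto|]. replace (k - 1 + 1) with k by lia; auto.
Qed.

Lemma star_adapted_of_span Y D : sub Y B -> card Y k -> sub D B' -> card D k ->
  g (span L Y) = span L' D -> star_adapted Y D.
Proof.
  intros YB CY DB CD gD.
  assert (through_sup : forall X', image_through Y X' -> sub D X').
  { intros X' HX'. pose proof HX' as [_ [_ [_ [X'B [CX' _]]]]].
    apply (indep_span_sub L' B'); auto; [apply indep_B'|]. rewrite <- gD.
    apply (incident_dim_lt L' exch' _ _ (k - 1) k); [| |lia|apply image_through_incident; auto].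
    - rewrite gD. apply dim_span_B'; auto. replace (k - 1 + 1) with k by lia; auto.
    - apply dim_span_B'; auto. }
  set (R c z := f_image (setU1 Y c) (setU1 D z)).
  destruct (inj_rel_card (setD B Y) (setD B' D) R (n + 1 - k) (n + 1 - k)) as [_ onto].
  - apply card_setD; auto. apply card_B.
  - apply card_setD; auto. apply card_B'.
  - intros c [Bc nYc]. destruct (setU1_B Y c) as [YcB CYc]; auto.
    destruct (f_image_exists _ YcB CYc) as [X' HX'].
    pose proof HX' as [X'B [CX' _]]. rewrite Nat.add_1_r in CX'.
    destruct (card_sub_S D X' k) as [z [X'z [nDz ->]]]; auto.
    { apply through_sup. exists c; auto. }
    exists z; split; [split; auto|exact HX'].
  - intros c1 c2 z [Bc1 nYc1] [Bc2 nYc2]. apply (image_through_inj Y); auto.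
  - refine (conj DB (conj CD (conj gD _))). intro X'; split.
    + intro HX'. pose proof HX' as [_ [_ [_ [X'B [CX' _]]]]]. repeat split; auto.
    + intros [X'B [CX' DX']]. rewrite Nat.add_1_r in CX'.
      destruct (card_sub_S D X' k) as [z [X'z [nDz ->]]]; auto.
      destruct (onto eq_refl z) as [c [[Bc nYc] Hc]]; [split; auto|]. exists c; auto.
Qed.

Lemma top_span Y : sub Y B -> card Y k -> ~ g_keeps_dim (span L Y) ->
  exists D, sub D B' /\ card D (k + 2) /\ g (span L Y) = span L' D.
Proof.
  intros YB CY nHg. destruct (g_spec _ (dim_span_k1 B Y indep_B YB CY)) as [[Hg|Hg] _]; [contradiction|].
  assert (high : forall X', image_through Y X' -> sub (span L' X') (g (span L Y))).
  { intros X' HX'. apply (incident_dim_gt L' exch' _ _ (k + 1) k); auto; [|lia|].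
    - destruct HX' as [_ [_ [_ [X'B [CX' _]]]]]. apply dim_span_B'; auto.
    - apply image_through_incident; auto. }
  destruct (two_images_through Y YB CY) as [X1 [X2 [e [H1 [H2 [X2e nX1e]]]]]].
  pose proof H1 as [_ [_ [_ [X1B [CX1 _]]]]]. pose proof H2 as [_ [_ [_ [X2B [CX2 _]]]]].
  assert (DB : sub (setU1 X1 e) B') by (intros x [X1x| ->]; auto).
  assert (CD : card (setU1 X1 e) (k + 2)).
  { replace (k + 2) with (S (k + 1)) by lia. apply card_setU1; auto. }
  exists (setU1 X1 e); repeat split; auto. symmetry.
  apply (dim_sub_eq L' exch' _ _ (k + 1) (k + 1)); auto.
  2: apply dim_span_B'; [auto|replace (k + 1 + 1) with (k + 2) by lia; auto].
  apply (span_least L'); [apply Hg|].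
  intros x [X1x| ->]; [apply (high X1)|apply (high X2)]; auto; apply sub_span; auto.
Qed.

Lemma top_adapted_of_span Y D : sub Y B -> card Y k -> sub D B' -> card D (k + 2) ->
  g (span L Y) = span L' D -> n = 2 * k + 1 /\ top_adapted Y D.
Proof.
  intros YB CY DB CD gD.
  assert (through_sub : forall X', image_through Y X' -> sub X' D).
  { intros X' HX'. pose proof HX' as [_ [_ [_ [X'B [CX' _]]]]].
    apply (indep_span_sub L' B'); auto; [apply indep_B'|]. rewrite <- gD.
    apply (incident_dim_gt L' exch' _ _ (k + 1) k); [| |lia|apply image_through_incident; auto].
    - rewrite gD. apply dim_span_B'; [auto|replace (k + 1 + 1) with (k + 2) by lia; auto].
    - apply dim_span_B'; auto. }
  assert (CD' : card D (S (k + 1))) by (replace (S (k + 1)) with (k + 2) by lia; auto).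
  set (R c z := f_image (setU1 Y c) (setD1 D z)).
  destruct (inj_rel_card (setD B Y) D R (n + 1 - k) (k + 2)) as [le onto]; auto.
  - apply card_setD; auto. apply card_B.
  - intros c [Bc nYc]. destruct (setU1_B Y c) as [YcB CYc]; auto.
    destruct (f_image_exists _ YcB CYc) as [X' HX']. pose proof HX' as [X'B [CX' _]].
    destruct (card_sub_S X' D (k + 1)) as [z [Dz [nX'z ->]]]; auto.
    { apply through_sub. exists c; auto. }
    exists z; split; [right; auto|]. unfold R. rewrite setD1U1; auto.
  - intros c1 c2 z [Bc1 nYc1] [Bc2 nYc2]. apply (image_through_inj Y); auto.
  - split; [lia|]. refine (conj DB (conj CD (conj gD _))). intro X'; split.
    + intro HX'. pose proof HX' as [_ [_ [_ [X'B [CX' _]]]]]. repeat split; auto.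
    + intros [X'B [CX' X'D]].
      destruct (card_sub_S X' D (k + 1)) as [z [Dz [nX'z ED]]]; auto.
      destruct (onto ltac:(lia) z Dz) as [c [[Bc nYc] Hc]].
      unfold R in Hc. rewrite ED, setD1U1 in Hc; auto. exists c; auto.
Qed.

Lemma star_adapted_exists Y : sub Y B -> card Y k -> g_keeps_dim (span L Y) ->
  exists D, star_adapted Y D.
Proof.
  intros YB CY Hg. destruct (star_span Y YB CY Hg) as [D [DB [CD gD]]].
  exists D; apply star_adapted_of_span; auto.
Qed.

Lemma top_adapted_exists Y : sub Y B -> card Y k -> ~ g_keeps_dim (span L Y) ->
  n = 2 * k + 1 /\ exists D, top_adapted Y D.
Proof.
  intros YB CY nHg. destruct (top_span Y YB CY nHg) as [D [DB [CD gD]]].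
  destruct (top_adapted_of_span Y D) as [En HD]; eauto.
Qed.

(* Two adjacent base [(k-1)]-subspaces cannot have one star and one top as image:
   a [k]-subspace between the star and the top would be hit twice. *)
Lemma star_top_not_adjacent Y1 Y2 c1 c2 D1 D2 :
  sub Y1 B -> card Y1 k -> sub Y2 B -> card Y2 k ->
  ~ Y1 c1 -> Y2 c1 -> B c2 -> ~ Y2 c2 -> setU1 Y1 c1 = setU1 Y2 c2 ->
  star_adapted Y1 D1 -> top_adapted Y2 D2 -> False.
Proof.
  intros Y1B CY1 Y2B CY2 nY1c1 Y2c1 Bc2 nY2c2 E H1 H2.
  pose proof H1 as [D1B [CD1 _]]. pose proof H2 as [D2B [CD2 _]].
  assert (Bc1 : B c1) by auto.
  destruct (setU1_B Y1 c1) as [W1B CW1]; auto.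
  destruct (f_image_exists _ W1B CW1) as [XW HXW]. pose proof HXW as [XWB [CXW _]].
  assert (D1XW : sub D1 XW) by (apply (adapted_rel _ _ _ _ _ H1); exists c1; auto).
  assert (XWD2 : sub XW D2) by (apply (adapted_rel _ _ _ _ _ H2); exists c2; rewrite <- E; auto).
  replace (k + 2) with (S (k + 1)) in CD2 by lia.
  destruct (card_sub_S XW D2 (k + 1)) as [b [D2b [nXWb _]]]; auto.
  assert (VB : sub (setU1 D1 b) B') by (intros x [D1x| ->]; auto).
  assert (CV : card (setU1 D1 b) (k + 1)).
  { rewrite Nat.add_1_r. apply card_setU1; auto. }
  destruct (adapted_through _ _ _ _ (setU1 D1 b) H1 VB CV) as [c [Bc [nY1c Hc]]].
  { intros x D1x; left; auto. }
  destruct (adapted_through _ _ _ _ (setU1 D1 b) H2 VB CV) as [d [Bd [nY2d Hd]]].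
  { intros x [D1x| ->]; auto. }
  destruct (setU1_B Y1 c) as [U1B CU1]; destruct (setU1_B Y2 d) as [U2B CU2]; auto.
  assert (Ecd : setU1 Y1 c = setU1 Y2 d) by (apply (f_image_inj _ _ (setU1 D1 b)); auto).
  assert (c1c : c1 = c).
  { assert (Hc1 : setU1 Y1 c c1) by (rewrite Ecd; left; auto). destruct Hc1; [contradiction|auto]. }
  subst c. apply nXWb. rewrite <- (f_image_unique _ _ _ Hc HXW). right; auto.
Qed.

Lemma g_keeps_dim_exchange Y a b : sub Y B -> card Y k -> Y a -> B b -> ~ Y b ->
  (g_keeps_dim (span L Y) <-> g_keeps_dim (span L (setU1 (setD1 Y a) b))).
Proof.
  intros YB CY Ya Bb nYb. set (Y' := setU1 (setD1 Y a) b).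
  assert (Y'B : sub Y' B) by (intros x [[? ?]| ->]; auto).
  assert (CY' : card Y' k).
  { replace k with (S (k - 1)) by lia. apply card_setU1; [apply card_setD1; auto|intros [? ?]; auto]. }
  assert (nY'a : ~ Y' a) by (intros [[_ ?]| ->]; auto).
  assert (Y'b : Y' b) by (right; auto).
  assert (E : setU1 Y b = setU1 Y' a).
  { apply seteq_eq; intro x; unfold Y', setU1, setD1. destruct (classic (x = a)) as [->|]; tauto. }
  destruct (classic (g_keeps_dim (span L Y))) as [K|nK];
    destruct (classic (g_keeps_dim (span L Y'))) as [K'|nK']; try tauto; exfalso.
  - destruct (star_adapted_exists Y YB CY K) as [D1 H1].
    destruct (top_adapted_exists Y' Y'B CY' nK') as [_ [D2 H2]].
    apply (star_top_not_adjacent Y Y' b a D1 D2); auto.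
  - destruct (star_adapted_exists Y' Y'B CY' K') as [D1 H1].
    destruct (top_adapted_exists Y YB CY nK) as [_ [D2 H2]].
    apply (star_top_not_adjacent Y' Y a b D1 D2); auto.
Qed.

Lemma g_keeps_dim_base_const Y1 Y2 : sub Y1 B -> card Y1 k -> sub Y2 B -> card Y2 k ->
  (g_keeps_dim (span L Y1) <-> g_keeps_dim (span L Y2)).
Proof.
  intros Y1B CY1 Y2B CY2. destruct (card_sub (setD Y1 Y2) Y1 k) as [m [_ Cm]]; auto.
  { intros x [? ?]; auto. }
  revert Y1 Y1B CY1 Cm. induction m as [|m IH]; intros Y1 Y1B CY1 Cm.
  - replace Y1 with Y2; [tauto|]. apply seteq_eq; intro x; split; revert x.
    + apply (card_sub_eq Y1 Y2 k k); auto.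
      intros x Y1x. apply NNPP; intro nY2x. apply (card0_nmem _ x Cm). split; auto.
    + intros x Y1x. apply NNPP; intro nY2x. apply (card0_nmem _ x Cm). split; auto.
  - destruct (card_S_mem _ _ Cm) as [a [Y1a nY2a]].
    assert (Hb : exists b, Y2 b /\ ~ Y1 b).
    { apply NNPP; intro nb. apply nY2a. apply (card_sub_eq Y2 Y1 k k); auto.
      intros x Y2x. apply NNPP; intro nY1x. apply nb; eauto. }
    destruct Hb as [b [Y2b nY1b]].
    rewrite (g_keeps_dim_exchange Y1 a b); auto. apply IH.
    + intros x [[? ?]| ->]; auto.
    + replace k with (S (k - 1)) by lia. apply card_setU1; [apply card_setD1; auto|intros [? ?]; auto].
    + assert (Cm' := card_setD1 _ _ _ Cm (conj Y1a nY2a)). replace (S m - 1) with m in Cm' by lia.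
      apply (card_ext _ _ _ Cm'). intro x; unfold setD, setD1, setU1. split.
      * intros [[Y1x nY2x] xa]; split; [left; split|]; auto.
      * intros [[[Y1x xa]| ->] nY2x]; [split; [split|]; auto|contradiction].
Qed.

Lemma adapted_setD1_inj rel s W w1 w2 D : sub W B -> card W (k + 1) -> W w1 -> W w2 ->
  adapted rel s (setD1 W w1) D -> adapted rel s (setD1 W w2) D -> w1 = w2.
Proof.
  intros WB CW Ww1 Ww2 H1 H2. apply NNPP; intro ne.
  assert (C := card_setD B W (k + 1) (n + 1) card_B WB CW).
  replace (n + 1 - (k + 1)) with (S (n - k - 1)) in C by lia.
  destruct (card_S_mem _ _ C) as [c [Bc nWc]].
  destruct (setD1_B W w1) as [Y1B CY1]; destruct (setD1_B W w2) as [Y2B CY2]; auto.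
  assert (nY1c : ~ setD1 W w1 c) by (intros [? ?]; auto).
  destruct (setU1_B _ c Y1B CY1 Bc nY1c) as [U1B CU1].
  destruct (f_image_exists _ U1B CU1) as [X HX].
  pose proof HX as [XB [CX _]].
  destruct (adapted_through _ _ _ _ X H2 XB CX) as [d [Bd [nY2d Hd]]].
  { apply (adapted_rel _ _ _ _ _ H1). exists c; auto. }
  destruct (setU1_B _ d Y2B CY2 Bd nY2d) as [U2B CU2].
  assert (E : setU1 (setD1 W w1) c = setU1 (setD1 W w2) d) by (apply (f_image_inj _ _ X); auto).
  assert (w2d : w2 = d).
  { assert (H : setU1 (setD1 W w2) d w2) by (rewrite <- E; left; split; auto).
    destruct H as [[_ ?]|?]; [congruence|auto]. }
  subst d. apply nWc. rewrite <- (setU1D1 W w2 Ww2), <- E. right; auto.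
Qed.

Lemma star_onto : (forall Y, sub Y B -> card Y k -> g_keeps_dim (span L Y)) ->
  forall V, sub V B' -> card V k -> exists Y, sub Y B /\ card Y k /\ g (span L Y) = span L' V.
Proof.
  intros all V VB CV. assert (C := card_setD B' V k (n + 1) card_B' VB CV).
  replace (n + 1 - k) with (S (n - k)) in C by lia.
  destruct (card_S_mem _ _ C) as [e [B'e nVe]].
  set (X' := setU1 V e).
  assert (X'B : sub X' B') by (intros x [? | ->]; auto).
  assert (CX' : card X' (k + 1)) by (rewrite Nat.add_1_r; apply card_setU1; auto).
  destruct (f_image_onto X' X'B CX') as [W [WB [CW HW]]].
  destruct (inj_rel_card W X' (fun w z => g (span L (setD1 W w)) = span L' (setD1 X' z)) (k + 1) (k + 1))
    as [_ onto]; auto.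
  - intros w Ww. destruct (setD1_B W w) as [Y1B CY1]; auto.
    destruct (star_adapted_exists _ Y1B CY1 (all _ Y1B CY1)) as [D HD]. pose proof HD as [DB [CD [gD _]]].
    assert (DX' : sub D X').
    { apply (adapted_rel _ _ _ _ _ HD). exists w. rewrite setU1D1; auto. split; [auto|split; [|auto]].
      intros [_ ?]; auto. }
    rewrite Nat.add_1_r in CX'.
    destruct (card_sub_S D X' k) as [z [X'z [nDz EX']]]; auto.
    exists z; split; auto. rewrite gD, EX', setD1U1; auto.
  - intros w1 w2 z Ww1 Ww2 E1 E2.
    destruct (setD1_B W w1) as [Y1B CY1]; destruct (setD1_B W w2) as [Y2B CY2]; auto.
    destruct (star_adapted_exists _ Y1B CY1 (all _ Y1B CY1)) as [D1 H1].
    destruct (star_adapted_exists _ Y2B CY2 (all _ Y2B CY2)) as [D2 H2].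
    replace D2 with D1 in H2; [apply (adapted_setD1_inj (fun D X' => sub D X') k W w1 w2 D1); auto|].
    destruct H1 as [D1B [_ [gD1 _]]]; destruct H2 as [D2B [_ [gD2 _]]].
    apply (indep_span_inj L' B'); [apply indep_B'|auto|auto|congruence].
  - destruct (onto eq_refl e) as [w [Ww Ew]]; [right; auto|].
    destruct (setD1_B W w) as [YB CY]; auto.
    exists (setD1 W w); repeat split; auto. rewrite Ew. unfold X'. rewrite setD1U1; auto.
Qed.

Lemma top_onto : (forall Y, sub Y B -> card Y k -> ~ g_keeps_dim (span L Y)) -> n = 2 * k + 1 ->
  forall V, sub V B' -> card V (k + 2) -> exists Y, sub Y B /\ card Y k /\ g (span L Y) = span L' V.
Proof.
  intros none En V VB CV. replace (k + 2) with (S (k + 1)) in CV by lia.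
  destruct (card_S_mem _ _ CV) as [e Ve].
  set (X' := setD1 V e).
  assert (X'B : sub X' B') by (intros x [? ?]; auto).
  assert (CX' : card X' (k + 1)) by (replace (k + 1) with (S (k + 1) - 1) by lia; apply card_setD1; auto).
  destruct (f_image_onto X' X'B CX') as [W [WB [CW HW]]].
  assert (C := card_setD B' X' (k + 1) (n + 1) card_B' X'B CX').
  replace (n + 1 - (k + 1)) with (k + 1) in C by lia.
  destruct (inj_rel_card W (setD B' X') (fun w z => g (span L (setD1 W w)) = span L' (setU1 X' z))
    (k + 1) (k + 1)) as [_ onto]; auto.
  - intros w Ww. destruct (setD1_B W w) as [Y1B CY1]; auto.
    destruct (top_adapted_exists _ Y1B CY1 (none _ Y1B CY1)) as [_ [D HD]]. pose proof HD as [DB [CD [gD _]]].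
    assert (X'D : sub X' D).
    { apply (adapted_rel _ _ _ _ _ HD). exists w. rewrite setU1D1; auto. split; [auto|split; [|auto]].
      intros [_ ?]; auto. }
    replace (k + 2) with (S (k + 1)) in CD by lia.
    destruct (card_sub_S X' D (k + 1)) as [z [Dz [nX'z ED]]]; auto.
    exists z; split; [split; auto|]. rewrite gD, ED; auto.
  - intros w1 w2 z Ww1 Ww2 E1 E2.
    destruct (setD1_B W w1) as [Y1B CY1]; destruct (setD1_B W w2) as [Y2B CY2]; auto.
    destruct (top_adapted_exists _ Y1B CY1 (none _ Y1B CY1)) as [_ [D1 H1]].
    destruct (top_adapted_exists _ Y2B CY2 (none _ Y2B CY2)) as [_ [D2 H2]].
    replace D2 with D1 in H2; [apply (adapted_setD1_inj (fun D X' => sub X' D) (k + 2) W w1 w2 D1); auto|].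
    destruct H1 as [D1B [_ [gD1 _]]]; destruct H2 as [D2B [_ [gD2 _]]].
    apply (indep_span_inj L' B'); [apply indep_B'|auto|auto|congruence].
  - destruct (onto eq_refl e) as [w [Ww Ew]]; [split; [auto|intros [_ ?]; auto]|].
    destruct (setD1_B W w) as [YB CY]; auto.
    exists (setD1 W w); repeat split; auto. rewrite Ew. unfold X'. rewrite setU1D1; auto.
Qed.

Lemma g_base_subsets_star : (forall Y, sub Y B -> card Y k -> g_keeps_dim (span L Y)) ->
  forall T, (exists S, base_subset L B (k - 1) S /\ g S = T) <-> base_subset L' B' (k - 1) T.
Proof.
  intros all T. rewrite (base_subset_iff L' exch' n dim_full' B' (k - 1) T base_B').
  replace (k - 1 + 1) with k by lia. split.
  - intros [S [HS <-]]. apply (base_subset_iff L exch n dim_full) in HS; [|exact base_B].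
    replace (k - 1 + 1) with k in HS by lia. destruct HS as [Y [YB [CY ->]]].
    destruct (star_adapted_exists Y YB CY (all Y YB CY)) as [D [DB [CD [gD _]]]]. exists D; auto.
  - intros [V [VB [CV ->]]]. destruct (star_onto all V VB CV) as [Y [YB [CY gY]]].
    exists (span L Y); split; auto. apply (base_subset_iff L exch n dim_full); [exact base_B|].
    replace (k - 1 + 1) with k by lia. eauto.
Qed.

Lemma g_base_subsets_top : (forall Y, sub Y B -> card Y k -> ~ g_keeps_dim (span L Y)) ->
  forall T, (exists S, base_subset L B (k - 1) S /\ g S = T) <-> base_subset L' B' (k + 1) T.
Proof.
  intros none T. destruct (card_sub_exists B k (n + 1) card_B) as [Y0 [Y0B CY0]]; [lia|].
  destruct (top_adapted_exists Y0 Y0B CY0 (none Y0 Y0B CY0)) as [En _].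
  rewrite (base_subset_iff L' exch' n dim_full' B' (k + 1) T base_B').
  replace (k + 1 + 1) with (k + 2) by lia. split.
  - intros [S [HS <-]]. apply (base_subset_iff L exch n dim_full) in HS; [|exact base_B].
    replace (k - 1 + 1) with k in HS by lia. destruct HS as [Y [YB [CY ->]]].
    destruct (top_adapted_exists Y YB CY (none Y YB CY)) as [_ [D [DB [CD [gD _]]]]]. exists D; auto.
  - intros [V [VB [CV ->]]]. destruct (top_onto none En V VB CV) as [Y [YB [CY gY]]].
    exists (span L Y); split; auto. apply (base_subset_iff L exch n dim_full); [exact base_B|].
    replace (k - 1 + 1) with k by lia. eauto.
Qed.

End FixedBase.

Lemma g_keeps_dim_on_base B Y1 Y2 : base L B -> sub Y1 B -> card Y1 k -> sub Y2 B -> card Y2 k ->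
  (g_keeps_dim (span L Y1) <-> g_keeps_dim (span L Y2)).
Proof.
  intros HB Y1B CY1 Y2B CY2. destruct (f_bases B HB) as [B' [HB' fB]].
  apply (g_keeps_dim_base_const B B'); auto.
Qed.

(* Extend a basis [I1] of [S1] to a base [B1], then a basis [I2] of [S2] by points of [B1] to a
   base [B2]; a [k]-subset of [B1] ∩ [B2] links the two. *)
Lemma g_keeps_dim_const S1 S2 : dim L S1 (k - 1) -> dim L S2 (k - 1) ->
  (g_keeps_dim S1 <-> g_keeps_dim S2).
Proof.
  intros D1 D2. apply (dim_iff L exch) in D1, D2.
  destruct D1 as [I1 [HI1 [C1 <-]]]. destruct D2 as [I2 [HI2 [C2 <-]]].
  replace (k - 1 + 1) with k in C1, C2 by lia.
  destruct (base_exists L exch n dim_full) as [B0 HB0].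
  destruct (indep_extend L exch n dim_full I1 B0 HI1 HB0) as [W1 [_ [_ HB1]]].
  set (B1 := fun x => I1 x \/ W1 x) in *.
  destruct (indep_extend L exch n dim_full I2 B1 HI2 HB1) as [W2 [W2B1 [I2W2 HB2]]].
  assert (CW2 : card W2 (n + 1 - k)).
  { apply (card_ext _ _ _ (card_setD _ _ _ _ (base_card L exch n dim_full _ HB2)
      (fun x h => or_introl h) C2)).
    intro x; split; [intros [[?|?] ?]; tauto|intro W2x; split; [right; auto|intro I2x; apply (I2W2 x); auto]]. }
  destruct (card_sub_exists W2 k (n + 1 - k) CW2) as [Y0 [Y0W2 CY0]]; [lia|].
  assert (Y0B1 : sub Y0 B1) by (intros x Y0x; apply W2B1, Y0W2, Y0x).
  rewrite (g_keeps_dim_on_base B1 I1 Y0 HB1 (fun x h => or_introl h) C1 Y0B1 CY0).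
  apply (g_keeps_dim_on_base _ Y0 I2 HB2 (fun x h => or_intror (Y0W2 x h)) CY0 (fun x h => or_introl h) C2).
Qed.

Lemma dim_k1_exists : exists S, dim L S (k - 1).
Proof.
  destruct (base_exists L exch n dim_full) as [B HB].
  destruct (card_sub_exists B k (n + 1) (base_card L exch n dim_full B HB)) as [Y [YB CY]]; [lia|].
  exists (span L Y). apply (dim_span_k1 B); auto. apply base_iff in HB; tauto.
Qed.

Lemma g_dichotomy :
  ((forall S, dim L S (k - 1) -> dim L' (g S) (k - 1)) /\ maps_base_subsets L L' (k - 1) (k - 1) g)
  \/
  ((forall S, dim L S (k - 1) -> dim L' (g S) (k + 1)) /\ maps_base_subsets L L' (k - 1) (k + 1) g).
Proof.
  destruct dim_k1_exists as [S0 HS0].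
  assert (const : forall S, dim L S (k - 1) -> (g_keeps_dim S <-> g_keeps_dim S0)).
  { intros S HS; apply g_keeps_dim_const; auto. }
  assert (dim_Y : forall B Y, base L B -> sub Y B -> card Y k -> dim L (span L Y) (k - 1)).
  { intros B Y HB; apply dim_span_k1. apply base_iff in HB; tauto. }
  destruct (classic (g_keeps_dim S0)) as [K0|nK0]; [left|right]; split.
  - intros S HS. apply const; auto.
  - intros B HB. destruct (f_bases B HB) as [B' [HB' fB]]. exists B'; split; auto.
    apply g_base_subsets_star; auto. intros Y YB CY. apply const; eauto.
  - intros S HS. destruct (g_spec S HS) as [[Hg|Hg] _]; [exfalso|auto]. apply nK0, (const S HS), Hg.
  - intros B HB. destruct (f_bases B HB) as [B' [HB' fB]]. exists B'; split; auto.
    apply g_base_subsets_top; auto. intros Y YB CY. rewrite const; eauto.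
Qed.

End Lemma2p8.

Theorem lemma2p8 (P P' : Type) (L : (P -> Prop) -> Prop) (L' : (P' -> Prop) -> Prop)
  (n k : nat) (f g : (P -> Prop) -> (P' -> Prop)) :
  linear_space L -> linear_space L' ->
  exchange_axiom L -> exchange_axiom L' ->
  axiom_P2 L -> axiom_P2 L' ->
  dim L full n -> dim L' full n ->
  1 <= k -> 2 * k + 1 <= n ->
  (forall S, dim L S k -> dim L' (f S) k) ->
  (forall S T, dim L S k -> dim L T k -> f S = f T -> S = T) ->
  maps_base_subsets L L' k k f ->
  (* g = f_{k-1}: g S is the unique subspace S' of dim k-1 or k+1 with f(G_k(S)) ⊆ G_k(S') *)
  (forall S, dim L S (k - 1) -> fk1_prop L L' k f S (g S)) ->
  (forall S S', dim L S (k - 1) -> fk1_prop L L' k f S S' -> seteq S' (g S)) ->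
  ((forall S, dim L S (k - 1) -> dim L' (g S) (k - 1)) /\
     maps_base_subsets L L' (k - 1) (k - 1) g)
  \/
  ((forall S, dim L S (k - 1) -> dim L' (g S) (k + 1)) /\
     maps_base_subsets L L' (k - 1) (k + 1) g).
Proof.
  intros _ _ exch exch' _ _ dim_full dim_full' k_pos n_large _ f_inj f_bases g_spec _.
  exact (g_dichotomy L L' n k f g exch exch' dim_full dim_full' k_pos n_large f_inj f_bases g_spec).
Qed.
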